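(* In the setting described in the context, assume $G$ satisfies Condition 1. Then for every $r\ge0$, at least $\max\{sp(\mathbf{A}),f+1\}$ columns of $\Phi(r+\nu-1,r)$ are lower bounded component-wise by $\beta^{\nu}\mathbf{1}$, where $\mathbf{1}\in\mathbb{R}^{n-\phi}$ is the all-ones column vector.
   Context: A synchronous system of $n$ agents communicates over a directed graph $G=(\mathcal{V},\mathcal{E})$, $\mathcal{V}=\{1,\dots,n\}$, without self-loops; $N_i^-=\{j:(j,i)\in\mathcal{E}\}$. At most $f$ agents are Byzantine faulty (may send arbitrary, possibly inconsistent values); $\mathcal{F}$ is the set of faulty agents, $\phi=|\mathcal{F}|\le f$, and the non-faulty agents are indexed $1,\dots,n-\phi$. An assignment matrix $\mathbf{A}\in\mathbb{R}^{k\times n}$ has nonnegative entries and columns summing to $1$; agent $i$ holds $g_i=\sum_{j=1}^k\mathbf{A}_{ji}h_j$ for admissible (convex, $L$-Lipschitz, nonempty compact argmin) $h_1,\dots,h_k:\mathbb{R}\to\mathbb{R}$. Sparsity parameter $sp(\mathbf{A})$: smallest $s$ such that the sum of any $s$ columns of $\mathbf{A}$ is component-wise positive ($n+1$ if the sum of all columns is not). Reduced graph w.r.t. $\mathcal{F}$: subgraph of $G$ obtained by removing the nodes of $\mathcal{F}$ with their edges and then removing up to $f$ additional incoming edges at each remaining node; $R_{\mathcal{F}}$ is the (finite) set of all reduced graphs and $\tau=|R_{\mathcal{F}}|$. A source component of a graph is the set of its nodes each having a directed path to every other node of the graph. Condition 1: for every $\mathcal{F}'\subseteq\mathcal{V}$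 with $|\mathcal{F}'|\le f$, every reduced graph w.r.t. $\mathcal{F}'$ has a source component with at least $\max\{f+1,sp(\mathbf{A})\}$ nodes. Algorithm 2 (run by non-faulty agents, step sizes $\alpha(t)$): arbitrary $x_i(0)$; in iteration $t\ge1$ agent $i$ sends $x_i(t-1)$ to all out-neighbors, receives a multiset of $|N_i^-|$ values (a default value replacing any missing message), discards the $f$ smallest and $f$ largest values (ties broken arbitrarily), lets $N_i^*(t)$ be the senders of the remaining values with $w_j$ the value from $j$, sets $w_i=x_i(t-1)$, and updates $x_i(t)=\frac{1}{|N_i^*(t)|+1}\sum_{j\in\{i\}\cup N_i^*(t)}w_j-\alpha(t-1)d_i(t-1)$, with $d_i(t-1)$ a (sub)gradient of $g_i$ at $x_i(t-1)$. Known matrix representation: with $\mathbf{x}(t)\in\mathbb{R}^{n-\phi}$ the vector of non-faulty states and $\mathbf{d}(t)$ the vector of the $d_i(t)$, one has $\mathbf{x}(t+1)=\mathbf{M}(t)\mathbf{x}(t)-\alpha(t)\mathbf{d}(t)$ for row-stochastic $(n-\phi)\times(n-\phi)$ matrices $\mathbf{M}(t)$ (depending on the execution), and there is a constant $0<\beta<1$ such that for every $t$ there is a reduced graph $\mathcal{H}(t)\in R_{\mathcal{F}}$ whose adjacency matrix $\mathbf{H}(t)$ (with $\mathbf{H}_{ij}(t)=1$ if $i=j$ or $(j,i)$ is an edge of $\mathcal{H}(t)$, and $0$ otherwise) satisfies $\mathbf{M}(t)\ge\beta\mathbf{H}(t)$ entrywise. Define $\Phi(t,r)=\mathbf{M}(t)\mathbf{M}(t-1)\cdots\mathbf{M}(r)$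 for $t\ge r$, and $\nu=\tau(n-\phi)$. *)

From HB Require Import structures.
From mathcomp Require Import all_boot all_order all_algebra.
Set Implicit Arguments. Unset Strict Implicit. Unset Printing Implicit Defensive.
Import Order.TTheory GRing.Theory Num.Theory.
Local Open Scope ring_scope.

(* Agents are 'I_n.  A directed graph on the agents is given by its edge set
   E : {set 'I_n * 'I_n}; the pair (j, i) \in E means the edge j -> i. *)

Definition sp_ok (R : numDomainType) (k n : nat) (A : 'M[R]_(k, n)) (s : nat) : bool :=
  [forall S : {set 'I_n}, (#|S| == s) ==> [forall j : 'I_k, 0 < \sum_(i in S) A j i]].

Definition sp (R : numDomainType) (k n : nat) (A : 'M[R]_(k, n)) : nat :=
  if [forall j : 'I_k, 0 < \sum_(i < n) A j i]
  then find (sp_ok A) (iota 0 n.+1)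
  else n.+1.

Definition assignment_matrix (R : numDomainType) (k n : nat) (A : 'M[R]_(k, n)) : Prop :=
  (forall j i, 0 <= A j i) /\ (forall i, \sum_(j < k) A j i = 1).

(* E is a reduced graph of G w.r.t. F: obtained by deleting the nodes of F
   (with their edges) and then deleting at most f incoming edges at every
   remaining node.  Its node set is ~: F. *)
Definition is_reduced (n : nat) (G : {set 'I_n * 'I_n}) (f : nat) (F : {set 'I_n})
    (E : {set 'I_n * 'I_n}) : bool :=
  [forall e in E, [&& e \in G, e.1 \notin F & e.2 \notin F]] &&
  [forall i in ~: F,
     (#|[set j | [&& (j, i) \in G, j \notin F & (j, i) \notin E]]| <= f)%N].

Definition reduced_graphs (n : nat) (G : {set 'I_n * 'I_n}) (f : nat) (F : {set 'I_n})
    : {set {set 'I_n * 'I_n}} :=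
  [set E | is_reduced G f F E].

Definition source_component (n : nat) (F : {set 'I_n}) (E : {set 'I_n * 'I_n})
    : {set 'I_n} :=
  [set i in ~: F | [forall j in ~: F, connect (fun x y => (x, y) \in E) i j]].

Definition condition1 (R : numDomainType) (k n : nat) (G : {set 'I_n * 'I_n})
    (f : nat) (A : 'M[R]_(k, n)) : Prop :=
  forall (F' : {set 'I_n}), (#|F'| <= f)%N ->
  forall E, is_reduced G f F' E -> (maxn f.+1 (sp A) <= #|source_component F' E|)%N.

(* Indexing of the non-faulty agents by 'I_(n - phi), phi = #|F|
   (in increasing order of agent labels). *)
Definition nf_agent (n : nat) (F : {set 'I_n}) (i : 'I_#|~: F|) : 'I_n :=
  enum_val i.

Definition adj_mx (R : numDomainType) (n : nat) (F : {set 'I_n}) (E : {set 'I_n * 'I_n})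
    : 'M[R]_#|~: F| :=
  \matrix_(i, j) (if (i == j) || ((nf_agent j, nf_agent i) \in E) then 1 else 0).

Definition Phi (R : numDomainType) (m : nat) (M : nat -> 'M[R]_m) (t r : nat) : 'M[R]_m :=
  \big[mulmx/1%:M]_(i < (t - r).+1) M (t - i)%N.

From HB Require Import structures.
From mathcomp Require Import all_boot all_order all_algebra zify.
Import Order.TTheory GRing.Theory Num.Theory.

(* Among the nu = tau (n - phi) matrices M(r), ..., M(r + nu - 1), by pigeonhole
   some reduced graph H bounds at least n - phi of them from below.  Fix a node j
   of the source component of H and follow the set of rows i with
   Phi(r + s - 1, r) i j >= beta ^ s: it contains j, never shrinks because the
   diagonal of every M(t) is at least beta, and grows at each step using H, since
   j reaches every node in H and so some edge of H leaves the set.  After n - phi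
   such steps it is everything, so the column of every node of the source
   component, of which Condition 1 provides max(f + 1, sp A), is bounded
   below by beta ^ nu.  Only nonnegativity of M(t) and the
   bound M(t) >= beta H(t) are used. *)

Set Implicit Arguments.
Unset Strict Implicit.
Unset Printing Implicit Defensive.
Local Open Scope ring_scope.

Lemma connect_exit (T : finType) (e : rel T) (A : {pred T}) x y :
  connect e x y -> x \in A -> y \notin A ->
  exists a b, [/\ e a b, a \in A & b \notin A].
Proof.
move=> /connectP[p + ->]; elim: p x => [|z p IH] x /=; first by move=> _ ->.
move=> /andP[exz pz] xA; case: (boolP (z \in A)) => [zA | zNA]; first exact: IH.
by move=> _; exists x, z.
Qed.

Lemma sum_count_mem (T : finType) (D : {pred T}) (s : seq T) :
  {subset s <= D} -> (\sum_(x in D) count_mem x s)%N = size s.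
Proof.
elim: s => [|y s IH] sD /=; first by rewrite big1.
rewrite big_split /= IH => [|x xs]; last by apply: sD; rewrite inE xs orbT.
rewrite (bigD1 y) ?sD ?mem_head //= eqxx big1 ?addn0 ?add1n // => x /andP[_].
by rewrite eq_sym => /negbTE ->.
Qed.

Lemma pigeonhole_count_mem (T : finType) (D : {pred T}) (s : seq T) k :
  {subset s <= D} -> (#|D| * k < size s)%N ->
  exists2 x, x \in D & (k < count_mem x s)%N.
Proof.
move=> sD lt_size; apply/exists_inP; apply: contraLR lt_size => /exists_inPn few.
rewrite -leqNgt -(sum_count_mem sD) -sum_nat_const; apply: leq_sum => x xD.
by rewrite leqNgt few.
Qed.

Lemma frequent_value (T : finType) (D : {pred T}) (h : nat -> T) r k :
  (0 < k)%N -> (forall t, h t \in D) ->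
  exists2 x, x \in D &
    (k <= count (fun t => h (r + t)%N == x) (iota 0 (#|D| * k)))%N.
Proof.
move=> k_gt0 hD; have D_gt0 : (0 < #|D|)%N by apply/card_gt0P; exists (h 0%N).
set s := [seq h (r + t)%N | t <- iota 0 (#|D| * k)].
have [x xD x_freq] : exists2 x, x \in D & (k.-1 < count_mem x s)%N.
  apply: pigeonhole_count_mem => [_ /mapP[t _ ->] // |].
  by rewrite size_map size_iota ltn_pmul2l ?prednK.
exists x => //; rewrite count_map in x_freq.
exact: leq_trans (leqSpred _) x_freq.
Qed.

Lemma increasing_sets_full (T : finType) (S : nat -> {set T}) (b : pred nat) s :
  S 0%N != set0 -> (forall t, S t \subset S t.+1) ->
  (forall t, b t -> S t != setT -> S t \proper S t.+1) ->
  (#|T| <= count b (iota 0 s))%N -> S s = setT.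
Proof.
move=> S0 S_sub S_grow enough.
have card_S t : (minn #|T| (count b (iota 0 t)).+1 <= #|S t|)%N.
  elim: t => [|t IH]; first by rewrite (leq_trans (geq_minr _ _)) // card_gt0.
  have -> : count b (iota 0 t.+1) = (count b (iota 0 t) + b t)%N.
    by rewrite -addn1 iotaD count_cat /= addn0.
  have card_sub := subset_leq_card (S_sub t).
  case bt: (b t); last by rewrite addn0 (leq_trans IH).
  have [St | StT] := eqVneq (S t) setT.
    by rewrite (leq_trans (geq_minl _ _)) // -cardsT subset_leq_card // -St.
  by move: (proper_card (S_grow t bt StT)) IH; lia.
by apply/eqP; rewrite eqEcard subsetT cardsT; move: (card_S s) enough; lia.
Qed.

Fixpoint lprod {R : numDomainType} {m : nat} (M : nat -> 'M[R]_m) (r s : nat)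
    : 'M[R]_m :=
  if s is s'.+1 then M (r + s')%N *m lprod M r s' else 1%:M.

Lemma Phi_lprod (R : numDomainType) m (M : nat -> 'M[R]_m) r s :
  (0 < s)%N -> Phi M (r + s).-1 r = lprod M r s.
Proof.
case: s => // s _; rewrite addnS /Phi addKn; elim: s => [|s IH].
  by rewrite big_ord_recl big_ord0 /= !addn0 subn0.
rewrite big_ord_recl subn0 /=; congr (_ *m _).
rewrite -[RHS]/(lprod M r s.+1) -IH.
by apply: eq_bigr => i _; rewrite /bump /= add1n addnS subSS.
Qed.

Section NonnegativeProducts.

Variables (R : realFieldType) (m : nat) (M : nat -> 'M[R]_m) (beta : R).
Hypothesis M_ge0 : forall t i j, 0 <= M t i j.
Hypothesis beta_ge0 : 0 <= beta.
Hypothesis M_diag : forall t i, beta <= M t i i.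

Lemma lprod_ge0 r s i j : 0 <= lprod M r s i j.
Proof.
elim: s i j => [|s IH] i j /=; first by rewrite mxE ler0n.
by rewrite mxE; apply: sumr_ge0 => l _; apply: mulr_ge0.
Qed.

Lemma lprodS_ge r s i l j :
  beta <= M (r + s)%N i l -> beta ^+ s <= lprod M r s l j ->
  beta ^+ s.+1 <= lprod M r s.+1 i j.
Proof.
move=> M_il P_lj; rewrite exprS.
apply: (@le_trans _ _ (M (r + s)%N i l * lprod M r s l j)).
  exact: ler_pM beta_ge0 (exprn_ge0 _ beta_ge0) M_il P_lj.
rewrite /= mxE (bigD1 l) //= lerDl; apply: sumr_ge0 => l' _.
exact: mulr_ge0 (M_ge0 _ _ _) (lprod_ge0 _ _ _ _).
Qed.

Lemma lprod_column_ge (e : rel 'I_m) (active : nat -> bool) r s j :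
  (forall i, connect e j i) ->
  (forall t a b, active t -> e a b -> beta <= M (r + t)%N b a) ->
  (m <= count active (iota 0 s))%N ->
  forall i, beta ^+ s <= lprod M r s i j.
Proof.
move=> j_reaches e_ge enough i.
pose S t := [set i | beta ^+ t <= lprod M r t i j].
have S_sub t : S t \subset S t.+1.
  by apply/subsetP => k; rewrite !inE; apply: lprodS_ge.
have jS t : j \in S t.
  elim: t => [|t IH]; last exact: subsetP (S_sub t) _ IH.
  by rewrite inE /= mxE eqxx expr0.
suff /setP/(_ i) : S s = setT by rewrite !inE.
rewrite -[m]card_ord in enough.
apply: (increasing_sets_full (b := active) _ S_sub _ enough) => [|t t_active].
  by apply/set0Pn; exists j.
rewrite eqEsubset subsetT /= => /subsetPn[k _ kNS].
have [a [b [e_ab aS bNS]]] := connect_exit (j_reaches k) (jS t) kNS.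
rewrite properE S_sub; apply/subsetPn; exists b => //.
by move: aS; rewrite !inE; apply: lprodS_ge; exact: e_ge.
Qed.

End NonnegativeProducts.

Section ReducedGraphs.

Variables (n : nat) (F : {set 'I_n}).
Local Notation nf := (@nf_agent n F).

Lemma nf_agent_inj : injective nf.
Proof. exact: enum_val_inj. Qed.

Lemma nf_agentP x : x \in ~: F -> exists i : 'I_#|~: F|, x = nf i.
Proof.
by move=> xF; exists (enum_rank_in xF x); rewrite /nf_agent enum_rankK_in.
Qed.

Lemma card_nf_agent_preimset (B : {set 'I_n}) :
  B \subset ~: F -> #|[set j | nf j \in B]| = #|B|.
Proof.
move=> BF; rewrite -(card_imset _ nf_agent_inj); congr #|pred_of_set _|.
apply/setP => x; apply/imsetP/idP => [[j] | xB]; first by rewrite inE => jB ->.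
by have [j def_x] := nf_agentP (subsetP BF x xB); exists j; rewrite ?inE -?def_x.
Qed.

Lemma source_component_sub E : source_component F E \subset ~: F.
Proof. by apply/subsetP => x; rewrite inE => /andP[]. Qed.

Definition nf_rel (E : {set 'I_n * 'I_n}) : rel 'I_#|~: F| :=
  fun a b => (nf a, nf b) \in E.

Lemma source_component_connect G f E j i :
  is_reduced G f F E -> nf j \in source_component F E ->
  connect (nf_rel E) j i.
Proof.
move=> /andP[/forall_inP E_nf _]; rewrite inE => /andP[_ /forall_inP j_reaches].
apply: contraT => ij; pose S := [set k | connect (nf_rel E) j k].
have nf_S k : (nf k \in nf @: S) = connect (nf_rel E) j k.
  by rewrite mem_imset ?inE //; exact: nf_agent_inj.
have jS : nf j \in nf @: S by rewrite nf_S.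
have iNS : nf i \notin nf @: S by rewrite nf_S.
have [a [b [ab /imsetP[a' a'S def_a] bNS]]] :=
  connect_exit (j_reaches _ (enum_valP i)) jS iNS.
have /and3P[_ _ bF] := E_nf _ ab.
have [b' def_b] : exists b', b = nf b' by apply: nf_agentP; rewrite inE.
suff : connect (nf_rel E) j b' by rewrite -nf_S -def_b (negbTE bNS).
apply: (connect_trans (_ : connect _ j a')); first by rewrite inE in a'S.
by rewrite connect1 // /nf_rel -def_a -def_b.
Qed.

Lemma adj_mx_lower (R : numDomainType) (M : 'M[R]_#|~: F|) beta E :
  (forall i j, beta * adj_mx R F E i j <= M i j) ->
  (forall i, beta <= M i i) /\ (forall a b, nf_rel E a b -> beta <= M b a).
Proof.
move=> M_ge; split => [i | a b ab].
  by have := M_ge i i; rewrite mxE eqxx mulr1.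
by have := M_ge b a; rewrite mxE [_ \in E]ab orbT mulr1.
Qed.

Lemma reduced_graph_schedule (R : numDomainType) G f
    (M : nat -> 'M[R]_#|~: F|) beta :
  (forall t, exists2 E, E \in reduced_graphs G f F &
     forall i j, beta * adj_mx R F E i j <= M t i j) ->
  exists H : nat -> {set 'I_n * 'I_n}, forall t,
    [/\ H t \in reduced_graphs G f F, forall i, beta <= M t i i &
        forall a b, nf_rel (H t) a b -> beta <= M t b a].
Proof.
pose good t E := [forall i, forall j, beta * adj_mx R F E i j <= M t i j].
move=> sched; have ex_good t : exists E, (E \in reduced_graphs G f F) && good t E.
  have [E ERG M_ge] := sched t; exists E; rewrite ERG.
  by apply/forallP => i; apply/forallP => j.
exists (fun t => xchoose (ex_good t)) => t.
have /andP[H_RG /forallP H_good] := xchooseP (ex_good t).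
have [] := @adj_mx_lower R (M t) beta (xchoose (ex_good t)).
  by move=> i j; exact: forallP (H_good i) j.
by split.
Qed.

End ReducedGraphs.

Arguments nf_rel {n} F E.

Theorem lemma2 (R : realFieldType) (n k f : nat)
    (G : {set 'I_n * 'I_n}) (A : 'M[R]_(k, n))
    (F : {set 'I_n}) (M : nat -> 'M[R]_#|~: F|) (beta : R) :
  (forall i : 'I_n, (i, i) \notin G) ->
  assignment_matrix A ->
  (#|F| <= f)%N ->
  condition1 G f A ->
  (forall t i j, 0 <= M t i j) ->
  (forall t i, \sum_j M t i j = 1) ->
  0 < beta < 1 ->
  (forall t, exists2 E, E \in reduced_graphs G f F &
       forall i j, beta * adj_mx R F E i j <= M t i j) ->
  let nu := (#|reduced_graphs G f F| * #|~: F|)%N in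
  forall r : nat,
    (maxn (sp A) f.+1 <=
      #|[set j | [forall i, (beta ^+ nu <= Phi M (r + nu).-1 r i j)%R]]|)%N.
Proof.
move=> _ _ F_le_f cond1 M_ge0 _ /andP[beta_gt0 _] sched nu r.
set RG := reduced_graphs G f F; set m := #|~: F|.
have red E : E \in RG -> is_reduced G f F E by rewrite inE.
have [H /all_and3[H_RG M_diag M_edge]] := reduced_graph_schedule sched.
have m_gt0 : (0 < m)%N.
  apply: leq_trans _ (subset_leq_card (source_component_sub F (H 0%N))).
  by apply: leq_trans (cond1 F F_le_f _ (red _ (H_RG 0%N))); rewrite leq_max.
have nu_gt0 : (0 < nu)%N.
  by rewrite muln_gt0 m_gt0 andbT; apply/card_gt0P; exists (H 0%N).
have [E ERG E_freq] := frequent_value r m_gt0 H_RG.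
rewrite maxnC; apply: leq_trans (cond1 F F_le_f E (red E ERG)) _.
rewrite -(card_nf_agent_preimset (source_component_sub F E)).
apply: subset_leq_card; apply/subsetP => j; rewrite in_set => jSC.
rewrite in_set; apply/forallP => i; rewrite Phi_lprod //.
apply: (lprod_column_ge M_ge0 (ltW beta_gt0) M_diag (e := nf_rel F E)
  (active := fun t => H (r + t)%N == E)) => //.
- by move=> i'; exact: source_component_connect (red E ERG) jSC.
- by move=> t a b /eqP <-; exact: M_edge.
Qed.
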